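(* Let $R$ be a commutative Noetherian ring of prime characteristic $p$ and $G$ an $x$-torsion-free left $R[x,f]$-module. Let $\mathfrak{p}$ be a maximal member of $\mathcal{I}(G)\setminus\{R\}$ with respect to inclusion, and let $L=\operatorname{ann}_G(\bigoplus_{n\ge0}\mathfrak{p}x^n)$ be the corresponding special annihilator submodule of $G$ (a minimal non-zero special annihilator submodule). Then $\mathfrak{p}$ is prime, and every non-zero $g\in L$ satisfies $\operatorname{grann}_{R[x,f]}R[x,f]g=\mathfrak{p}R[x,f]$.
   Context: $R[x,f]$ is the Frobenius skew polynomial ring: free left $R$-module on $(x^i)_{i\ge0}$, $xr=r^px$; $\mathfrak{p}R[x,f]=\bigoplus_n\mathfrak{p}x^n$. $x$-torsion-free: $xg=0\Rightarrow g=0$. $\operatorname{ann}_G\mathfrak{B}$ is the set of elements of $G$ killed by $\mathfrak{B}$; special annihilator submodules are of this form for graded two-sided ideals $\mathfrak{B}$. $\operatorname{grann}N$ is the set of $\sum r_ix^i$ with each $r_ix^i$ annihilating $N$. $\mathcal{I}(G)$ is the set of ideals $\mathfrak{b}$ with $\operatorname{grann}N=\bigoplus_n\mathfrak{b}x^n$ for some $R[x,f]$-submodule $N$ of $G$. *)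

From HB Require Import structures.
From mathcomp Require Import all_boot all_order all_algebra.
Set Implicit Arguments. Unset Strict Implicit. Unset Printing Implicit Defensive.
Import GRing.Theory.
Local Open Scope ring_scope.

Definition is_ideal (R : comNzRingType) (I : R -> Prop) : Prop :=
  [/\ I 0, (forall a b, I a -> I b -> I (a - b)) & (forall r a, I a -> I (r * a))].

Definition same_set (T : Type) (A B : T -> Prop) : Prop := forall t, A t <-> B t.
Definition sub_set (T : Type) (A B : T -> Prop) : Prop := forall t, A t -> B t.

Definition proper_ideal (R : comNzRingType) (I : R -> Prop) : Prop :=
  is_ideal I /\ ~ I 1.

Definition prime_ideal (R : comNzRingType) (I : R -> Prop) : Prop :=
  proper_ideal I /\ (forall a b, I (a * b) -> I a \/ I b).

Definition noetherian (R : comNzRingType) : Prop :=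
  forall I : nat -> R -> Prop,
    (forall n, is_ideal (I n)) ->
    (forall n, sub_set (I n) (I n.+1)) ->
    exists N, forall n, (N <= n)%N -> same_set (I n) (I N).

(* A left R[x,f]-module (f the Frobenius r |-> r^p) is an R-module G
   together with an additive map xm : G -> G (the action of x) with
   x (r g) = r^p (x g), i.e. the relation x r = r^p x of R[x,f]. *)
Definition frob_module (R : comNzRingType) (p : nat) (G : lmodType R)
    (xm : G -> G) : Prop :=
  (forall g h, xm (g + h) = xm g + xm h) /\
  (forall (r : R) g, xm (r *: g) = r ^+ p *: xm g).

(* Elements of R[x,f] are represented by their coefficient sequences
   sum_i s_i x^i, i.e. by s : {poly R} (only as a left R-module; the
   multiplication of R[x,f] is not needed). Action of s on g: *)
Definition skew_act (R : comNzRingType) (G : lmodType R) (xm : G -> G)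
    (s : {poly R}) (g : G) : G :=
  \sum_(i < size s) s`_i *: iter i xm g.

Definition x_torsion_free (R : comNzRingType) (G : lmodType R) (xm : G -> G) :=
  forall g, xm g = 0 -> g = 0.

Definition is_submodule (R : comNzRingType) (G : lmodType R) (xm : G -> G)
    (N : G -> Prop) : Prop :=
  [/\ N 0, (forall g h, N g -> N h -> N (g + h)),
      (forall (r : R) g, N g -> N (r *: g)) & (forall g, N g -> N (xm g))].

(* b R[x,f] = (+)_n b x^n, as a subset of R[x,f]. *)
Definition graded_ext (R : comNzRingType) (b : R -> Prop) : {poly R} -> Prop :=
  fun s => forall i, b s`_i.

Definition grann (R : comNzRingType) (G : lmodType R) (xm : G -> G)
    (N : G -> Prop) : {poly R} -> Prop :=
  fun s => forall i g, N g -> s`_i *: iter i xm g = 0.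

Definition annG (R : comNzRingType) (G : lmodType R) (xm : G -> G)
    (B : {poly R} -> Prop) : G -> Prop :=
  fun g => forall s, B s -> skew_act xm s g = 0.

Definition cyclic_sub (R : comNzRingType) (G : lmodType R) (xm : G -> G)
    (g : G) : G -> Prop :=
  fun h => exists s : {poly R}, h = skew_act xm s g.

Definition IG (R : comNzRingType) (G : lmodType R) (xm : G -> G)
    (b : R -> Prop) : Prop :=
  is_ideal b /\
  exists N : G -> Prop, is_submodule xm N /\ same_set (grann xm N) (graded_ext b).

(* In an x-torsion-free module, r x^i kills a submodule N iff r kills N: from
   r x g = 0 we get x (r g) = r^(p-1) (r x g) = 0, hence r g = 0.  So
   grann N = (ann_R N) R[x,f], and the members of I(G) are exactly the
   R-annihilators of submodules.  If P = ann_R N is maximal among the proper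
   ones and ab is in P but a is not, then aN is a submodule whose annihilator
   is proper and contains P and b, hence equals P.  Likewise, for a non-zero g
   in ann_G (P R[x,f]) the annihilator of R[x,f] g is proper and contains P. *)
From mathcomp Require Import all_boot all_order all_algebra.
From Stdlib Require Import Classical.
Set Implicit Arguments. Unset Strict Implicit. Unset Printing Implicit Defensive.
Import GRing.Theory.
Local Open Scope ring_scope.

Section Annihilator.

Variables (R : comNzRingType) (G : lmodType R).

Definition annR (N : G -> Prop) : R -> Prop :=
  fun r => forall h, N h -> r *: h = 0.

Definition scale_set (a : R) (N : G -> Prop) : G -> Prop :=
  fun h => exists2 k, N k & h = a *: k.

Lemma annR_ideal (N : G -> Prop) : is_ideal (annR N).
Proof.
split.
- by move=> h _; rewrite scale0r.
- by move=> a b Ha Hb h Nh; rewrite scalerBl Ha // Hb // subrr.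
- by move=> r a Ha h Nh; rewrite -scalerA Ha // scaler0.
Qed.

Lemma annR_scale_set (a b : R) (N : G -> Prop) :
  annR (scale_set a N) b <-> annR N (b * a).
Proof.
split=> [Hb k Nk | Hba _ [k Nk ->]]; rewrite ?scalerA.
- by rewrite -scalerA; apply: Hb; exists k.
- exact: Hba.
Qed.

End Annihilator.

Lemma graded_ext_inj (R : comNzRingType) (b c : R -> Prop) :
  b 0 -> c 0 -> same_set (graded_ext b) (graded_ext c) -> same_set b c.
Proof.
have graded_C (d : R -> Prop) r : d 0 -> d r -> graded_ext d r%:P.
  by move=> d0 dr i; rewrite coefC; case: eqP.
move=> b0 c0 E r; split=> H.
- by have /E /(_ 0%N) := graded_C _ _ b0 H; rewrite coefC.
- by have /E /(_ 0%N) := graded_C _ _ c0 H; rewrite coefC.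
Qed.

Lemma graded_ext_same (R : comNzRingType) (b c : R -> Prop) :
  same_set b c -> same_set (graded_ext b) (graded_ext c).
Proof. by move=> E s; split=> H i; apply/E. Qed.

Section SkewAction.

Variables (R : comNzRingType) (G : lmodType R) (xm : G -> G).

Lemma skew_act_widen (s : {poly R}) (g : G) n :
  (size s <= n)%N -> skew_act xm s g = \sum_(i < n) s`_i *: iter i xm g.
Proof.
move=> Hn; rewrite /skew_act (big_ord_widen n (fun i => s`_i *: iter i xm g) Hn).
rewrite [RHS](bigID (fun i : 'I_n => (i < size s)%N)) /= [X in _ = _ + X]big1 ?addr0 //.
by move=> i; rewrite -leqNgt => Hi; rewrite nth_default // scale0r.
Qed.

Lemma skew_actD (s t : {poly R}) (g : G) :
  skew_act xm (s + t) g = skew_act xm s g + skew_act xm t g.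
Proof.
pose n := maxn (size s) (size t).
rewrite !(skew_act_widen _ _ (n := n)) ?leq_maxl ?leq_maxr ?(leq_trans (size_polyD _ _)) //.
by rewrite -big_split; apply: eq_bigr => i _; rewrite coefD scalerDl.
Qed.

Lemma skew_actZ (r : R) (s : {poly R}) (g : G) :
  skew_act xm (r *: s) g = r *: skew_act xm s g.
Proof.
rewrite (skew_act_widen _ _ (n := size s)) ?size_scale_leq // /skew_act scaler_sumr.
by apply: eq_bigr => i _; rewrite coefZ scalerA.
Qed.

Lemma cyclic_sub_self (g : G) : cyclic_sub xm g g.
Proof. by exists 1; rewrite /skew_act size_poly1 big_ord1 coefC scale1r. Qed.

Lemma iter_submodule (N : G -> Prop) i h :
  is_submodule xm N -> N h -> N (iter i xm h).
Proof. by case=> _ _ _ Nx Nh; elim: i => //= i IH; apply: Nx. Qed.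

End SkewAction.

Section FrobeniusModule.

Variables (R : comNzRingType) (p : nat) (G : lmodType R) (xm : G -> G).
Hypotheses (frob : frob_module p xm) (p_gt0 : (0 < p)%N).

Lemma frob_sum n (F : 'I_n -> G) : xm (\sum_(i < n) F i) = \sum_(i < n) xm (F i).
Proof.
have [xmD _] := frob.
have xm0 : xm 0 = 0 by apply: (addrI (xm 0)); rewrite -xmD !addr0.
exact: (big_morph xm xmD xm0).
Qed.

(* Left multiplication by x in R[x,f]: x (sum s_i x^i) = sum s_i^p x^(i+1). *)
Definition skew_mulX (s : {poly R}) : {poly R} :=
  \poly_(i < (size s).+1) (if i is j.+1 then s`_j ^+ p else 0).

Lemma skew_act_mulX (s : {poly R}) (g : G) :
  skew_act xm (skew_mulX s) g = xm (skew_act xm s g).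
Proof.
rewrite (skew_act_widen _ _ (n := (size s).+1)) ?size_poly //.
rewrite big_ord_recl coef_poly /= scale0r add0r /skew_act frob_sum.
apply: eq_bigr => i _; rewrite coef_poly /bump /= ltnS ltn_ord.
by case: frob => _ ->.
Qed.

Lemma cyclic_sub_submodule (g : G) : is_submodule xm (cyclic_sub xm g).
Proof.
split.
- by exists 0; rewrite /skew_act size_poly0 big_ord0.
- by move=> _ _ [s ->] [t ->]; exists (s + t); rewrite skew_actD.
- by move=> r _ [s ->]; exists (r *: s); rewrite skew_actZ.
- by move=> _ [s ->]; exists (skew_mulX s); rewrite skew_act_mulX.
Qed.

Lemma scale_set_submodule (a : R) (N : G -> Prop) :
  is_submodule xm N -> is_submodule xm (scale_set a N).
Proof.
case=> N0 ND NZ NX; split.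
- by exists 0; rewrite ?scaler0.
- by move=> _ _ [k Nk ->] [l Nl ->]; exists (k + l); [apply: ND | rewrite scalerDr].
- by move=> r _ [k Nk ->]; exists (r *: k); [apply: NZ | rewrite !scalerA mulrC].
- move=> _ [k Nk ->]; exists (a ^+ p.-1 *: xm k); first exact/NZ/NX.
  by case: frob => _ ->; rewrite scalerA -exprS prednK.
Qed.

Section MaximalAnnihilator.

Variables (P : R -> Prop) (N : G -> Prop).
Hypotheses (subN : is_submodule xm N) (PN : same_set P (annR N)) (P1 : ~ P 1).
Hypothesis maxP : forall M, is_submodule xm M -> ~ annR M 1 ->
  sub_set P (annR M) -> same_set (annR M) P.

Let P_ideal : is_ideal P.
Proof.
have [N0 NB NM] := annR_ideal N.
by split=> [|a b|r a]; rewrite ?PN //; [apply: NB | apply: NM].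
Qed.

Lemma max_annR_prime : prime_ideal P.
Proof.
split=> [|a b Pab]; first by split; [exact: P_ideal |].
have [Pa | nPa] := classic (P a); [by left | right].
have [_ _ PM] := P_ideal.
have nann1 : ~ annR (scale_set a N) 1.
  by move/annR_scale_set; rewrite mul1r => /PN.
have Psub : sub_set P (annR (scale_set a N)).
  by move=> r Pr; apply/annR_scale_set/PN; rewrite mulrC; apply: PM.
apply/(maxP (scale_set_submodule a subN) nann1 Psub)/annR_scale_set/PN.
by rewrite mulrC.
Qed.

Lemma max_annR_cyclic (g : G) :
  annG xm (graded_ext P) g -> g <> 0 -> same_set (annR (cyclic_sub xm g)) P.
Proof.
move=> Pg g0; have [_ _ PM] := P_ideal.
apply: maxP (cyclic_sub_submodule g) _ _ => [H1 | r Pr _ [s ->]].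
- by apply: g0; rewrite -[g]scale1r; apply/H1/cyclic_sub_self.
- by rewrite -skew_actZ; apply: Pg => i; rewrite coefZ mulrC; apply: PM.
Qed.

End MaximalAnnihilator.

Hypothesis torsion_free : x_torsion_free xm.

Lemma scale_iter_eq0 (r : R) i (g : G) : r *: iter i xm g = 0 -> r *: g = 0.
Proof.
elim: i g => [//|i IH] g; rewrite iterSr => /IH rxg0; apply: torsion_free.
by case: frob => _ ->; rewrite -(prednK p_gt0) exprS mulrC -scalerA rxg0 scaler0.
Qed.

Lemma grann_annR (N : G -> Prop) :
  is_submodule xm N -> same_set (grann xm N) (graded_ext (annR N)).
Proof.
move=> subN s; split=> Hs i h Nh.
- exact: (scale_iter_eq0 (Hs i h Nh)).
- by apply: Hs; apply: iter_submodule.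
Qed.

Lemma IG_annR (N : G -> Prop) : is_submodule xm N -> IG xm (annR N).
Proof. by move=> subN; split; [exact: annR_ideal | exists N; split; last exact: grann_annR]. Qed.

Lemma IG_annRP (b : R -> Prop) :
  IG xm b -> exists2 N, is_submodule xm N & same_set b (annR N).
Proof.
move=> [[b0 _ _] [N [subN grannN]]]; exists N => //.
apply: graded_ext_inj => //; first by case: (annR_ideal N).
by move=> s; rewrite -grannN; apply: grann_annR.
Qed.

End FrobeniusModule.

Theorem lemma3p8 (R : comNzRingType) (p : nat) (G : lmodType R) (xm : G -> G)
  (P : R -> Prop) :
  noetherian R ->
  prime p -> (p%:R : R) = 0 ->
  frob_module p xm ->
  x_torsion_free xm ->
  IG xm P -> ~ P 1 ->
  (forall b : R -> Prop, IG xm b -> ~ b 1 -> sub_set P b -> same_set b P) ->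
  prime_ideal P /\
  (forall g : G, annG xm (graded_ext P) g -> g <> 0 ->
     same_set (grann xm (cyclic_sub xm g)) (graded_ext P)).
Proof.
move=> _ /prime_gt0 p_gt0 _ frob tf IGP P1 maxP.
have [N subN PN] := IG_annRP frob p_gt0 tf IGP.
have max_annR M : is_submodule xm M -> ~ annR M 1 -> sub_set P (annR M) -> same_set (annR M) P.
  by move=> subM; apply/maxP/(IG_annR frob p_gt0 tf subM).
split; first exact: (max_annR_prime frob p_gt0 subN PN P1 max_annR).
move=> g Pg g0 s; have := grann_annR frob p_gt0 tf (cyclic_sub_submodule frob g) s.
have := graded_ext_same (max_annR_cyclic frob PN max_annR Pg g0) s.
tauto.
Qed.
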